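(* In the four-direction cube setting with the random model described in the context, let $k\ge0$, let $R_b=\{r\in R:X_r=0\}$, and let $C_b=\mathcal N(R_b)\setminus\mathcal N(R\setminus R_b)$ (equivalently, the set of cells none of whose four rays is a zero measurement). For integers $a$ write $\rho_a:=d-|a|$, and define \[ F(a_1,a_2)=\Big(1-\tfrac{\rho_{a_1}+\rho_{a_2}-1}{d^3}\Big)^k,\quad F(a_1,a_2,a_3)=\Big(1-\tfrac{\rho_{a_1}+\rho_{a_2}+\rho_{a_3}-2}{d^3}\Big)^k, \] \[ F(a_1,a_2,a_3,a_4)=\Big(1-\tfrac{\rho_{a_1}+\rho_{a_2}+\rho_{a_3}+\rho_{a_4}-3}{d^3}\Big)^k. \] Then \[ N_C(k):=\mathbb{E}[|C_b|]=d^3-N_C^1+N_C^2-N_C^3+N_C^4, \] where \[ N_C^1=4d\Big(d\big(1-\tfrac1{d^2}\big)^k+2\sum_{s=1}^{d-1}s\big(1-\tfrac{s}{d^3}\big)^k\Big), \] \[ N_C^2=2d\sum_{i,l\in[d]}F(l+i-1-d,\,i-l)+4\sum_{i,j,l\in[d]}F(l-i,\,l-j), \] \[ N_C^3=2\sum_{i,j,l\in[d]}\Big(F(l+i-1-d,\,l-i,\,l-j)+F(l-i,\,l-j,\,l+j-1-d)\Big), \] \[ N_C^4=\sum_{i,j,l\in[d]}F(l+i-1-d,\,l-i,\,l+j-1-d,\,l-j). \]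
   Context: Cube setting. Let $d\ge2$ be an integer and $[d]=\{1,\dots,d\}$. The cells are $C=\{(i,j,l): i,j,l\in[d]\}$ (voxels of $[0,d]^3$), $|C|=d^3$. There are four families of rays (projection directions with normals proportional to $(-1,0,1),(1,0,1),(0,-1,1),(0,1,1)$), each ray identified with the set of cells it meets: for $s\in\{1-d,\dots,d-1\}$ and $t\in[d]$, $r^1_{s,t}=\{(i,j,l)\in C: i+l-1-d=s,\ j=t\}$ and $r^2_{s,t}=\{(i,j,l)\in C: i-l=s,\ j=t\}$; for $s\in[d]$ and $t\in\{1-d,\dots,d-1\}$, $r^3_{s,t}=\{(i,j,l)\in C: i=s,\ j+l-1-d=t\}$ and $r^4_{s,t}=\{(i,j,l)\in C: i=s,\ j-l=t\}$. $R_a$ is the family of rays $r^a_{\cdot,\cdot}$, $R=R_1\cup R_2\cup R_3\cup R_4$, $|R|=4d(2d-1)$; $|r|$ is the number of cells of ray $r$ (so $|r^{1}_{s,t}|=|r^2_{s,t}|=d-|s|$ and $|r^3_{s,t}|=|r^4_{s,t}|=d-|t|$). Each cell lies on exactly one ray of each family. Random model: $k$ cells are drawn independently and uniformly from $C$ (with replacement). For $r\in R$, $X_r\in\{0,1\}$ equals $1$ (a ''zero measurement'') iff none of the drawn cells lies on $r$. For a set $S$ of rays, $\mathcal N(S)$ is the set of cells lying on at least one ray of $S$. *)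

From HB Require Import structures.
From mathcomp Require Import all_boot all_order all_algebra.
Set Implicit Arguments. Unset Strict Implicit. Unset Printing Implicit Defensive.
Import Order.TTheory GRing.Theory Num.Theory.
Local Open Scope ring_scope.

(* Cells (i,j,l) in [d]^3, stored 0-based as ordinals; coordinate value = val + 1. *)
Definition cell (d : nat) : finType := ('I_d * 'I_d * 'I_d)%type.
Definition ci d (c : cell d) : int := ((c.1.1 : nat).+1)%:Z.
Definition cj d (c : cell d) : int := ((c.1.2 : nat).+1)%:Z.
Definition cl d (c : cell d) : int := ((c.2 : nat).+1)%:Z.

Definition ray1 d (s t : int) : {set cell d} :=
  [set c | (ci c + cl c - 1 - d%:Z == s) && (cj c == t)].
Definition ray2 d (s t : int) : {set cell d} :=
  [set c | (ci c - cl c == s) && (cj c == t)].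
Definition ray3 d (s t : int) : {set cell d} :=
  [set c | (ci c == s) && (cj c + cl c - 1 - d%:Z == t)].
Definition ray4 d (s t : int) : {set cell d} :=
  [set c | (ci c == s) && (cj c - cl c == t)].

(* Index ranges: o : 'I_(2d-1) encodes s = o - (d-1) in {1-d,...,d-1};
   p : 'I_d encodes t = p + 1 in [d]. *)
Definition offs d (o : nat) : int := o%:Z - (d%:Z - 1).
Definition pos1 (p : nat) : int := (p.+1)%:Z.

Definition R1 d : {set {set cell d}} :=
  [set ray1 d (offs d o) (pos1 p) | o : 'I_(2 * d - 1), p : 'I_d].
Definition R2 d : {set {set cell d}} :=
  [set ray2 d (offs d o) (pos1 p) | o : 'I_(2 * d - 1), p : 'I_d].
Definition R3 d : {set {set cell d}} :=
  [set ray3 d (pos1 p) (offs d o) | p : 'I_d, o : 'I_(2 * d - 1)].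
Definition R4 d : {set {set cell d}} :=
  [set ray4 d (pos1 p) (offs d o) | p : 'I_d, o : 'I_(2 * d - 1)].
Definition Rall d : {set {set cell d}} := R1 d :|: R2 d :|: R3 d :|: R4 d.

(* A draw of k cells (with replacement). X_r = 1 iff no drawn cell lies on r. *)
Definition Xr d k (w : {ffun 'I_k -> cell d}) (r : {set cell d}) : bool :=
  [forall m, w m \notin r].
Definition Rb d k (w : {ffun 'I_k -> cell d}) : {set {set cell d}} :=
  [set r in Rall d | ~~ Xr w r].
Definition Nbhd d (S : {set {set cell d}}) : {set cell d} := \bigcup_(r in S) r.
Definition Cb d k (w : {ffun 'I_k -> cell d}) : {set cell d} :=
  Nbhd (Rb w) :\: Nbhd (Rall d :\: Rb w).

Definition NC (d k : nat) : rat :=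
  (\sum_(w : {ffun 'I_k -> cell d}) (#|Cb w|)%:R) / (#|{ffun 'I_k -> cell d}|)%:R.

Definition rho (d : nat) (a : int) : rat := (d%:Z - `|a|%:Z)%:~R.
Definition F2 (d k : nat) (a1 a2 : int) : rat :=
  (1 - (rho d a1 + rho d a2 - 1) / (d ^ 3)%:R) ^+ k.
Definition F3 (d k : nat) (a1 a2 a3 : int) : rat :=
  (1 - (rho d a1 + rho d a2 + rho d a3 - 2) / (d ^ 3)%:R) ^+ k.
Definition F4 (d k : nat) (a1 a2 a3 a4 : int) : rat :=
  (1 - (rho d a1 + rho d a2 + rho d a3 + rho d a4 - 3) / (d ^ 3)%:R) ^+ k.

Definition NC1 (d k : nat) : rat :=
  4 * d%:R * (d%:R * (1 - 1 / (d ^ 2)%:R) ^+ k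
     + 2 * \sum_(1 <= s < d) s%:R * (1 - s%:R / (d ^ 3)%:R) ^+ k).

(* sums over i,j,l in [d]: i = (val) + 1 *)
Definition NC2 (d k : nat) : rat :=
  2 * d%:R * (\sum_(i < d) \sum_(l < d)
      F2 d k (pos1 l + pos1 i - 1 - d%:Z) (pos1 i - pos1 l))
  + 4 * (\sum_(i < d) \sum_(j < d) \sum_(l < d)
      F2 d k (pos1 l - pos1 i) (pos1 l - pos1 j)).

Definition NC3 (d k : nat) : rat :=
  2 * (\sum_(i < d) \sum_(j < d) \sum_(l < d)
     (F3 d k (pos1 l + pos1 i - 1 - d%:Z) (pos1 l - pos1 i) (pos1 l - pos1 j)
      + F3 d k (pos1 l - pos1 i) (pos1 l - pos1 j) (pos1 l + pos1 j - 1 - d%:Z))).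

Definition NC4 (d k : nat) : rat :=
  \sum_(i < d) \sum_(j < d) \sum_(l < d)
     F4 d k (pos1 l + pos1 i - 1 - d%:Z) (pos1 l - pos1 i)
            (pos1 l + pos1 j - 1 - d%:Z) (pos1 l - pos1 j).

From HB Require Import structures.
From mathcomp Require Import all_boot all_order all_algebra zify ring lra.
Import Order.TTheory GRing.Theory Num.Theory.
Set Implicit Arguments. Unset Strict Implicit. Unset Printing Implicit Defensive.
Local Open Scope ring_scope.

(* A cell c lies on exactly four rays, one per family; call them the rays at c.
   They pairwise meet only in c, and their lengths are rho of the offsets
   off1 c, ..., off4 c.  Hence c is in C_b exactly when each ray at c receives
   a draw, and inclusion-exclusion over the four rays, together with
   "k draws avoid a set of m cells with probability (1 - m/d^3)^k" and
   "a union of rays through c has size (sum of lengths) - (number of rays) + 1",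
   gives the probability cover_prob c that c is in C_b.  By linearity,
   N_C(k) is the sum of cover_prob c over the d^3 cells (NC_sum_cover).

   Reflecting i, reflecting j
   and swapping i and j are bijections of the cube permuting the four ray
   lengths of every cell; they identify the four single-ray sums with one,
   which is computed by grouping pairs (i, l) by |i - l| (giving N_C^1), and
   similarly collapse the pair, triple and quadruple sums to N_C^2, N_C^3 and
   N_C^4.  The file proves general counting facts first, then the geometry of
   rays at a cell, then the probabilistic identity, then the cube sums. *)

Lemma count_ord_eq n (b : int) :
  (\sum_(x < n) ((x : nat)%:Z == b))%N = ((0 <= b) && (b < n%:Z)).
Proof. by elim: n => [|n IH]; rewrite ?big_ord0 ?big_ord_recr /= ?IH; lia. Qed.

Lemma count_ord_diff n (a : int) :
  (\sum_(x < n) \sum_(z < n) ((x : nat)%:Z - (z : nat)%:Z == a)%R)%N = (n - `|a|)%N.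
Proof.
elim: n => [|n IH]; first by rewrite big_ord0.
rewrite big_ord_recr /= big_ord_recr /=.
under eq_bigr => x _ do rewrite big_ord_recr /=.
rewrite big_split /= IH.
rewrite (eq_bigr (fun x : 'I_n => nat_of_bool ((x : nat)%:Z == a + n%:Z))); last first.
  by move=> x _; lia.
rewrite [X in (_ + (X + _))%N](eq_bigr (fun z : 'I_n => nat_of_bool ((z : nat)%:Z == n%:Z - a))).
  by rewrite !count_ord_eq; lia.
by move=> z _; lia.
Qed.

Lemma sum_ord_shift (R : nmodType) n (h : nat -> R) :
  \sum_(x < n) h (n - x)%N = \sum_(1 <= s < n.+1) h s.
Proof.
rewrite big_add1 /= big_mkord (reindex_inj rev_ord_inj); apply: eq_bigr => x _.
by congr h => /=; have := ltn_ord x; lia.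
Qed.

Lemma sum_ord_dist (R : comNzRingType) n (h : nat -> R) :
  \sum_(x < n) \sum_(z < n) h `|(x : nat)%:Z - (z : nat)%:Z|%N =
  n%:R * h 0%N + 2 * \sum_(1 <= s < n) (n - s)%:R * h s.
Proof.
elim: n => [|n IH]; first by rewrite !big_ord0 big_geq // mul0r mulr0 addr0.
rewrite big_ord_recr /= (eq_bigr (fun x : 'I_n =>
  \sum_(z < n) h `|(x : nat)%:Z - (z : nat)%:Z|%N + h (n - x)%N)); last first.
  by move=> x _; rewrite big_ord_recr /=; congr (_ + h _); have := ltn_ord x; lia.
rewrite big_split /= IH sum_ord_shift big_ord_recr /= (eq_bigr (fun z : 'I_n => h (n - z)%N)).
  rewrite sum_ord_shift subrr absz0.
  have drop_last : \sum_(1 <= s < n.+1) (n - s)%:R * h s = \sum_(1 <= s < n) (n - s)%:R * h s.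
    by case: (n) => [|m]; [rewrite !big_geq | rewrite big_nat_recr //= subnn mul0r addr0].
  have coefS : \sum_(1 <= s < n.+1) (n.+1 - s)%:R * h s =
      \sum_(1 <= s < n.+1) (n - s)%:R * h s + \sum_(1 <= s < n.+1) h s.
    rewrite -big_split; apply: eq_big_nat => s /andP[_ hs] /=.
    by rewrite (subSn (hs : (s <= n)%N)) mulrSr mulrDl mul1r.
  by rewrite coefS drop_last mulrSr; ring.
by move=> z _; congr h; have := ltn_ord z; lia.
Qed.

Lemma sum_indicator (T : finType) (A : pred T) :
  \sum_(x : T) (x \in A : nat)%:R = #|A|%:R :> rat.
Proof.
rewrite -sum1_card natr_sum [RHS]big_mkcond.
by apply: eq_bigr => x _; case: (x \in A).
Qed.

Lemma incl_excl4 (R : comNzRingType) (b1 b2 b3 b4 : bool) :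
  ([&& ~~ b1, ~~ b2, ~~ b3 & ~~ b4] : nat)%:R =
  1 - ((b1 : nat)%:R + (b2 : nat)%:R + (b3 : nat)%:R + (b4 : nat)%:R)
  + ((b1 && b2 : nat)%:R + (b1 && b3 : nat)%:R + (b1 && b4 : nat)%:R
     + (b2 && b3 : nat)%:R + (b2 && b4 : nat)%:R + (b3 && b4 : nat)%:R)
  - ((b1 && b2 && b3 : nat)%:R + (b1 && b2 && b4 : nat)%:R
     + (b1 && b3 && b4 : nat)%:R + (b2 && b3 && b4 : nat)%:R)
  + (b1 && b2 && b3 && b4 : nat)%:R :> R.
Proof. by case: b1; case: b2; case: b3; case: b4; rewrite /=; ring. Qed.

Section UnionThroughPoint.
Variables (T : finType) (c : T).

Lemma card_union2 (A B : {set T}) : A :&: B = [set c] ->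
  (#|A :|: B|%:R : rat) = #|A|%:R + #|B|%:R - 1.
Proof.
move=> h; have := cardsUI A B; rewrite h cards1 => /(congr1 (fun n => n%:R : rat)).
rewrite !natrD => e; lra.
Qed.

Lemma card_union3 (A B C : {set T}) :
  A :&: B = [set c] -> A :&: C = [set c] -> B :&: C = [set c] ->
  (#|A :|: B :|: C|%:R : rat) = #|A|%:R + #|B|%:R + #|C|%:R - 2.
Proof.
move=> hAB hAC hBC; rewrite card_union2 ?card_union2 ?setIUl ?hAC ?hBC ?setUid //; lra.
Qed.

Lemma card_union4 (A B C D : {set T}) :
  A :&: B = [set c] -> A :&: C = [set c] -> A :&: D = [set c] ->
  B :&: C = [set c] -> B :&: D = [set c] -> C :&: D = [set c] ->
  (#|A :|: B :|: C :|: D|%:R : rat) = #|A|%:R + #|B|%:R + #|C|%:R + #|D|%:R - 3.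
Proof.
move=> hAB hAC hAD hBC hBD hCD.
rewrite card_union2 ?card_union3 ?setIUl ?hAD ?hBD ?hCD ?setUid //; lra.
Qed.
End UnionThroughPoint.

Section Geometry.
Variable d : nat.
Implicit Types (c : cell d) (s t : int).

Lemma big_cells R (idx : R) (op : Monoid.com_law idx) (F : cell d -> R) :
  \big[op/idx]_(c : cell d) F c =
  \big[op/idx]_(i < d) \big[op/idx]_(j < d) \big[op/idx]_(l < d) F ((i, j), l).
Proof. by rewrite pair_bigA pair_bigA; apply: eq_bigr => -[[i j] l]. Qed.

Lemma card_cells : #|cell d| = (d ^ 3)%N.
Proof. by rewrite !card_prod !card_ord !expnS expn0 muln1 mulnA. Qed.

Definition off1 c : int := ci c + cl c - 1 - d%:Z.
Definition off2 c : int := ci c - cl c.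
Definition off3 c : int := cj c + cl c - 1 - d%:Z.
Definition off4 c : int := cj c - cl c.

Definition ray1_at c := ray1 d (off1 c) (cj c).
Definition ray2_at c := ray2 d (off2 c) (cj c).
Definition ray3_at c := ray3 d (ci c) (off3 c).
Definition ray4_at c := ray4 d (ci c) (off4 c).

(* Reflections of the cube in the coordinates i, j, l, and the exchange of
   i and j; swap_ij exchanges off1 with off3 and off2 with off4. *)
Definition flip_i c : cell d := ((rev_ord c.1.1, c.1.2), c.2).
Definition flip_j c : cell d := ((c.1.1, rev_ord c.1.2), c.2).
Definition flip_l c : cell d := ((c.1.1, c.1.2), rev_ord c.2).
Definition swap_ij c : cell d := ((c.1.2, c.1.1), c.2).

Lemma flip_iK : involutive flip_i.
Proof. by case=> [[x y] z]; rewrite /flip_i /= rev_ordK. Qed.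
Lemma flip_jK : involutive flip_j.
Proof. by case=> [[x y] z]; rewrite /flip_j /= rev_ordK. Qed.
Lemma flip_lK : involutive flip_l.
Proof. by case=> [[x y] z]; rewrite /flip_l /= rev_ordK. Qed.
Lemma swap_ijK : involutive swap_ij.
Proof. by case=> [[x y] z]. Qed.

Lemma offs_flip_l c :
  [/\ off1 (flip_l c) = off2 c, off2 (flip_l c) = off1 c,
      off3 (flip_l c) = off4 c & off4 (flip_l c) = off3 c].
Proof.
case: c => [[x y] z]; rewrite /off1 /off2 /off3 /off4 /ci /cj /cl /=.
have := ltn_ord z; split; lia.
Qed.

Lemma offs_flip_i c :
  [/\ off1 (flip_i c) = - off2 c, off2 (flip_i c) = - off1 c,
      off3 (flip_i c) = off3 c & off4 (flip_i c) = off4 c].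
Proof.
case: c => [[x y] z]; rewrite /off1 /off2 /off3 /off4 /ci /cj /cl /=.
have := ltn_ord x; split; lia.
Qed.

Lemma offs_flip_j c :
  [/\ off1 (flip_j c) = off1 c, off2 (flip_j c) = off2 c,
      off3 (flip_j c) = - off4 c & off4 (flip_j c) = - off3 c].
Proof.
case: c => [[x y] z]; rewrite /off1 /off2 /off3 /off4 /ci /cj /cl /=.
have := ltn_ord y; split; lia.
Qed.

Lemma off_bound c :
  [/\ (`|off1 c| < d)%N, (`|off2 c| < d)%N, (`|off3 c| < d)%N & (`|off4 c| < d)%N].
Proof.
case: c => [[x y] z]; rewrite /off1 /off2 /off3 /off4 /ci /cj /cl /=.
have := ltn_ord x; have := ltn_ord y; have := ltn_ord z; split; lia.
Qed.

Lemma offs_onto s : (`|s| < d)%N -> exists o : 'I_(2 * d - 1), offs d o = s.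
Proof.
move=> hs; have ho : (absz (s + (d%:Z - 1))%R < 2 * d - 1)%N by lia.
by exists (Ordinal ho); rewrite /offs /=; lia.
Qed.

Lemma rays_at_in c :
  [/\ ray1_at c \in Rall d, ray2_at c \in Rall d,
      ray3_at c \in Rall d & ray4_at c \in Rall d].
Proof.
case: (off_bound c) => /offs_onto[o1 h1] /offs_onto[o2 h2] /offs_onto[o3 h3] /offs_onto[o4 h4].
rewrite /Rall /ray1_at /ray2_at /ray3_at /ray4_at -h1 -h2 -h3 -h4 !inE.
by split; rewrite imset2_f ?orbT.
Qed.

Lemma rays_through r c : r \in Rall d -> c \in r ->
  [\/ r = ray1_at c, r = ray2_at c, r = ray3_at c | r = ray4_at c].
Proof.
rewrite /Rall !inE => /orP[/orP[/orP[]|]|] /imset2P[u v _ _ ->];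
  rewrite inE => /andP[/eqP <- /eqP <-].
- exact: Or41.
- exact: Or42.
- exact: Or43.
- exact: Or44.
Qed.

Lemma mem_Cb k (w : {ffun 'I_k -> cell d}) c : (c \in Cb w) =
  [&& ~~ Xr w (ray1_at c), ~~ Xr w (ray2_at c), ~~ Xr w (ray3_at c) & ~~ Xr w (ray4_at c)].
Proof.
have [in1 in2 in3 in4] := rays_at_in c.
have inRb r : r \in Rall d -> (r \in Rb w) = ~~ Xr w r by move=> hr; rewrite inE hr.
have at_c r : r \in [:: ray1_at c; ray2_at c; ray3_at c; ray4_at c] -> c \in r.
  by rewrite !inE => /or4P[] /eqP ->; rewrite inE !eqxx.
rewrite /Cb /Nbhd inE; apply/andP/and4P => [[uncov _] | [h1 h2 h3 h4]].
- have hit r : r \in Rall d -> c \in r -> ~~ Xr w r.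
    move=> hr hc; rewrite -inRb //; apply: contraNT uncov => hb.
    by apply/bigcupP; exists r; rewrite // in_setD hb.
  by split; apply: hit => //; apply: at_c; rewrite !inE eqxx ?orbT.
- split; last by apply/bigcupP; exists (ray1_at c); [rewrite inRb | apply: at_c; rewrite inE eqxx].
  apply/bigcupP => -[r]; rewrite inE => /andP[notb hr] hc; move: notb.
  by rewrite inRb // negbK; case: (rays_through hr hc) => ->; apply/negP.
Qed.

(* Reflecting l maps family 1 onto family 2, and swapping i and j maps
   families 3, 4 onto families 1, 2; so every ray length is that of a ray of
   family 2, i.e. d - |offset|. *)
Lemma ray1_flip_l s t : ray1 d s t = flip_l @^-1: ray2 d s t.
Proof.
apply/setP => c; rewrite !inE -/(off1 c) -/(off2 _).
by have [_ -> _ _] := offs_flip_l c.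
Qed.

Lemma ray4_swap s t : ray4 d s t = swap_ij @^-1: ray2 d t s.
Proof. by apply/setP => -[[x y] z]; rewrite !inE andbC. Qed.

Lemma ray3_swap s t : ray3 d s t = swap_ij @^-1: ray1 d t s.
Proof. by apply/setP => -[[x y] z]; rewrite !inE andbC. Qed.

(* A ray of family 2 has d - |s| cells: one for each pair i, l with i - l = s. *)
Lemma card_ray2 s (y : 'I_d) : #|ray2 d s (pos1 y)| = (d - `|s|)%N.
Proof.
rewrite -(count_ord_diff d s) -sum1_card big_mkcond big_cells /=.
apply: eq_bigr => x _; rewrite exchange_big /=; apply: eq_bigr => z _.
rewrite (bigD1 y) //= big1 => [|j /negbTE nj]; rewrite inE /ci /cj /cl /pos1 /=.
- by rewrite eqxx andbT; case: ifP; lia.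
- by rewrite eqz_nat eqSS val_eqE nj andbF.
Qed.

Lemma rho_nat (a : int) : (`|a| <= d)%N -> rho d a = (d - `|a|)%N%:R.
Proof. by move=> h; rewrite /rho subzn. Qed.

Lemma rhoN (a : int) : rho d (- a) = rho d a.
Proof. by rewrite /rho abszN. Qed.

Definition len1 c : rat := rho d (off1 c).
Definition len2 c : rat := rho d (off2 c).
Definition len3 c : rat := rho d (off3 c).
Definition len4 c : rat := rho d (off4 c).

Lemma lens_flip_i c :
  [/\ len1 (flip_i c) = len2 c, len2 (flip_i c) = len1 c,
      len3 (flip_i c) = len3 c & len4 (flip_i c) = len4 c].
Proof.
have [e1 e2 e3 e4] := offs_flip_i c.
by rewrite /len1 /len2 /len3 /len4 e1 e2 e3 e4 !rhoN.
Qed.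

Lemma lens_flip_j c :
  [/\ len1 (flip_j c) = len1 c, len2 (flip_j c) = len2 c,
      len3 (flip_j c) = len4 c & len4 (flip_j c) = len3 c].
Proof.
have [e1 e2 e3 e4] := offs_flip_j c.
by rewrite /len1 /len2 /len3 /len4 e1 e2 e3 e4 !rhoN.
Qed.

Lemma lens_at (i j l : 'I_d) :
  [/\ rho d (pos1 l + pos1 i - 1 - d%:Z) = len1 ((i, j), l),
      rho d (pos1 l - pos1 i) = len2 ((i, j), l),
      rho d (pos1 l + pos1 j - 1 - d%:Z) = len3 ((i, j), l)
    & rho d (pos1 l - pos1 j) = len4 ((i, j), l)].
Proof.
rewrite /len1 /len2 /len3 /len4 /off1 /off2 /off3 /off4 -!(rhoN (pos1 l - _)) !opprB.
by rewrite ![pos1 l + _]addrC.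
Qed.

Lemma card_rays_at c :
  [/\ #|ray1_at c|%:R = len1 c, #|ray2_at c|%:R = len2 c,
      #|ray3_at c|%:R = len3 c & #|ray4_at c|%:R = len4 c].
Proof.
have [b1 b2 b3 b4] := off_bound c.
rewrite /len1 /len2 /len3 /len4 (rho_nat (ltnW b1)) (rho_nat (ltnW b2)).
rewrite (rho_nat (ltnW b3)) (rho_nat (ltnW b4)).
rewrite /ray1_at /ray2_at /ray3_at /ray4_at ray3_swap ray4_swap !ray1_flip_l.
rewrite !(card_preimset _ (inv_inj swap_ijK)) !(card_preimset _ (inv_inj flip_lK)).
by split; rewrite ?(card_ray2 _ c.1.2) ?(card_ray2 _ c.1.1).
Qed.

Ltac meet_tac :=
  apply/setP => -[[x' y'] z'];
  rewrite !inE /off1 /off2 /off3 /off4 /ci /cj /cl /=; apply/idP/eqP;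
  [ move=> /andP[/andP[/eqP ? /eqP ?] /andP[/eqP ? /eqP ?]];
    congr ((_, _), _); apply/val_inj => /=; lia
  | by case=> -> -> ->; rewrite !eqxx ].

Lemma meet12 c : ray1_at c :&: ray2_at c = [set c].
Proof. by case: c => [[x y] z]; meet_tac. Qed.
Lemma meet13 c : ray1_at c :&: ray3_at c = [set c].
Proof. by case: c => [[x y] z]; meet_tac. Qed.
Lemma meet14 c : ray1_at c :&: ray4_at c = [set c].
Proof. by case: c => [[x y] z]; meet_tac. Qed.
Lemma meet23 c : ray2_at c :&: ray3_at c = [set c].
Proof. by case: c => [[x y] z]; meet_tac. Qed.
Lemma meet24 c : ray2_at c :&: ray4_at c = [set c].
Proof. by case: c => [[x y] z]; meet_tac. Qed.
Lemma meet34 c : ray3_at c :&: ray4_at c = [set c].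
Proof. by case: c => [[x y] z]; meet_tac. Qed.
End Geometry.

Section Draws.
Variables (d k : nat).
Hypothesis d_gt0 : (0 < d)%N.
Local Notation draw := {ffun 'I_k -> cell d}.
Implicit Types (w : draw) (c : cell d).

Definition avoid_prob (m : rat) : rat := (1 - m / (d ^ 3)%:R) ^+ k.

Lemma Xr_setU w (A B : {set cell d}) : Xr w (A :|: B) = Xr w A && Xr w B.
Proof.
apply/forallP/andP => [h | [/forallP h1 /forallP h2] m]; last by rewrite inE negb_or h1 h2.
by split; apply/forallP => m; have := h m; rewrite inE negb_or => /andP[].
Qed.

Lemma count_avoiding (B : {set cell d}) :
  \sum_(w : draw) (Xr w B : nat)%:R = ((d ^ 3)%:R ^+ k : rat) * avoid_prob #|B|%:R.
Proof.
have avoid w : Xr w B = (w \in ffun_on (~: B)).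
  by apply/forallP/ffun_onP => h m; have := h m; rewrite inE.
under eq_bigr => w _ do rewrite avoid.
rewrite sum_indicator card_ffun_on card_ord natrX -exprMn /avoid_prob.
have d3_neq0 : ((d ^ 3)%:R : rat) != 0 by rewrite pnatr_eq0 expn_eq0 negb_and -lt0n d_gt0.
have := cardsC B; rewrite card_cells => /(congr1 (fun n => n%:R : rat)).
by rewrite natrD => eC; congr (_ ^+ _); rewrite mulrBr mulr1 mulrCA divff // mulr1 -eC; ring.
Qed.

Definition singles c : rat :=
  avoid_prob (len1 c) + avoid_prob (len2 c) + avoid_prob (len3 c) + avoid_prob (len4 c).
Definition pairs c : rat :=
  avoid_prob (len1 c + len2 c - 1) + avoid_prob (len1 c + len3 c - 1)
  + avoid_prob (len1 c + len4 c - 1) + avoid_prob (len2 c + len3 c - 1)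
  + avoid_prob (len2 c + len4 c - 1) + avoid_prob (len3 c + len4 c - 1).
Definition triples c : rat :=
  avoid_prob (len1 c + len2 c + len3 c - 2) + avoid_prob (len1 c + len2 c + len4 c - 2)
  + avoid_prob (len1 c + len3 c + len4 c - 2) + avoid_prob (len2 c + len3 c + len4 c - 2).
Definition quad c : rat := avoid_prob (len1 c + len2 c + len3 c + len4 c - 3).

Definition cover_prob c : rat := 1 - singles c + pairs c - triples c + quad c.

Lemma count_covered c :
  \sum_(w : draw) (c \in Cb w : nat)%:R = ((d ^ 3)%:R ^+ k : rat) * cover_prob c.
Proof.
under eq_bigr => w _ do rewrite mem_Cb incl_excl4 -!Xr_setU.
rewrite !(big_split, sumrN) /= !count_avoiding sumr_const card_ffun card_ord card_cells.
have [c1 c2 c3 c4] := card_rays_at c.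
have m12 := meet12 c; have m13 := meet13 c; have m14 := meet14 c.
have m23 := meet23 c; have m24 := meet24 c; have m34 := meet34 c.
rewrite (card_union4 m12 m13 m14 m23 m24 m34) (card_union3 m12 m13 m23).
rewrite (card_union3 m12 m14 m24) (card_union3 m13 m14 m34) (card_union3 m23 m24 m34).
rewrite (card_union2 m12) (card_union2 m13) (card_union2 m14) (card_union2 m23).
rewrite (card_union2 m24) (card_union2 m34) c1 c2 c3 c4 [((d ^ 3) ^ k)%:R]natrX.
by rewrite /cover_prob /singles /pairs /triples /quad; ring.
Qed.

(* Linearity of expectation: N_C(k) is the sum over cells of their covering probability. *)
Lemma NC_sum_cover : NC d k = \sum_c cover_prob c.
Proof.
rewrite /NC card_ffun card_ord card_cells.
under eq_bigr => w _ do rewrite -sum_indicator.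
rewrite exchange_big /=; under eq_bigr => c _ do rewrite count_covered.
have d3k_neq0 : ((d ^ 3) ^ k)%:R != 0 :> rat by rewrite pnatr_eq0 -lt0n !expn_gt0 d_gt0.
by rewrite -mulr_sumr -natrX mulrAC divff // mul1r.
Qed.
End Draws.

Section CellSums.
Variable d : nat.
Implicit Type f : rat -> rat -> rat -> rat -> rat.

(* Sums over the cube are invariant under the three symmetries, which permute
   the four ray lengths of every cell. *)
Lemma sum_flip_i f :
  \sum_(c : cell d) f (len1 c) (len2 c) (len3 c) (len4 c) =
  \sum_(c : cell d) f (len2 c) (len1 c) (len3 c) (len4 c).
Proof.
rewrite (reindex_inj (inv_inj (@flip_iK d))); apply: eq_bigr => c _.
by have [-> -> -> ->] := lens_flip_i c.
Qed.

Lemma sum_flip_j f :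
  \sum_(c : cell d) f (len1 c) (len2 c) (len3 c) (len4 c) =
  \sum_(c : cell d) f (len1 c) (len2 c) (len4 c) (len3 c).
Proof.
rewrite (reindex_inj (inv_inj (@flip_jK d))); apply: eq_bigr => c _.
by have [-> -> -> ->] := lens_flip_j c.
Qed.

Lemma sum_swap_ij f :
  \sum_(c : cell d) f (len1 c) (len2 c) (len3 c) (len4 c) =
  \sum_(c : cell d) f (len3 c) (len4 c) (len1 c) (len2 c).
Proof. by rewrite (reindex_inj (inv_inj (@swap_ijK d))). Qed.

Lemma sum_cells_no_j (R : pzSemiRingType) (g : 'I_d -> 'I_d -> R) :
  \sum_(c : cell d) g c.1.1 c.2 = d%:R * \sum_(i < d) \sum_(l < d) g i l.
Proof.
rewrite big_cells mulr_sumr; apply: eq_bigr => i _.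
by rewrite /= sumr_const card_ord mulr_natl.
Qed.

Variable k : nat.
Hypothesis d_gt0 : (0 < d)%N.
Local Notation P := (avoid_prob d k).

(* The single-ray sum of family 2, grouping the pairs (i, l) by |i - l|. *)
Lemma sum_len2 :
  \sum_(c : cell d) P (len2 c) =
  d%:R * (d%:R * (1 - 1 / (d ^ 2)%:R) ^+ k
          + 2 * \sum_(1 <= s < d) s%:R * (1 - s%:R / (d ^ 3)%:R) ^+ k).
Proof.
pose h t := P (d - t)%N%:R.
have -> : \sum_(c : cell d) P (len2 c) =
    d%:R * \sum_(i < d) \sum_(l < d) h `|(i : nat)%:Z - (l : nat)%:Z|%N.
  rewrite -sum_cells_no_j; apply: eq_bigr => -[[i j] l] _.
  rewrite /h /len2 /off2 rho_nat /ci /cl /=; last by have := ltn_ord i; have := ltn_ord l; lia.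
  by congr (P _%:R); lia.
rewrite sum_ord_dist big_nat_rev /=.
have -> : h 0%N = (1 - 1 / (d ^ 2)%:R) ^+ k.
  rewrite /h /P /avoid_prob subn0 !natrX; congr (_ ^+ _); field.
  by rewrite pnatr_eq0 -lt0n.
congr (_ * (_ + 2 * _)); apply: eq_big_nat => s /andP[_ s_lt].
by rewrite /h add1n subSS (subKn (ltnW s_lt)).
Qed.

(* By symmetry all four families contribute the sum of family 2. *)
Lemma sum_singles : \sum_(c : cell d) singles k c = NC1 d k.
Proof.
rewrite /singles !big_split /= (sum_swap_ij (fun _ _ x _ => P x)).
rewrite (sum_swap_ij (fun _ _ _ x => P x)) !(sum_flip_i (fun x _ _ _ => P x)).
by rewrite sum_len2 /NC1; ring.
Qed.

(* Pairs of rays in a common coordinate plane (families 1-2 and 3-4) all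
   contribute alike, as do the four pairs across the two planes. *)
Lemma sum_pairs : \sum_(c : cell d) pairs k c = NC2 d k.
Proof.
rewrite /pairs !big_split /= (sum_swap_ij (fun _ _ x y => P (x + y - 1))).
rewrite (sum_flip_i (fun x _ y _ => P (x + y - 1))) (sum_flip_i (fun x _ _ y => P (x + y - 1))).
rewrite !(sum_flip_j (fun _ x y _ => P (x + y - 1))).
have -> : \sum_(c : cell d) P (len1 c + len2 c - 1) = d%:R * \sum_(i < d) \sum_(l < d)
    F2 d k (pos1 l + pos1 i - 1 - d%:Z) (pos1 i - pos1 l).
  rewrite -sum_cells_no_j; apply: eq_bigr => -[[i j] l] _ /=.
  by have [e1 _ _ _] := lens_at i j l; rewrite /F2 e1.
have -> : \sum_(c : cell d) P (len2 c + len4 c - 1) = \sum_(i < d) \sum_(j < d) \sum_(l < d)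
    F2 d k (pos1 l - pos1 i) (pos1 l - pos1 j).
  rewrite big_cells; apply: eq_bigr => i _; apply: eq_bigr => j _; apply: eq_bigr => l _.
  by have [_ e2 _ e4] := lens_at i j l; rewrite /F2 e2 e4.
by rewrite /NC2; ring.
Qed.

(* Each triple omits one family; by symmetry only two kinds remain. *)
Lemma sum_triples : \sum_(c : cell d) triples k c = NC3 d k.
Proof.
rewrite /triples !big_split /= (sum_flip_j (fun x y z _ => P (x + y + z - 2))).
rewrite (sum_flip_i (fun x _ y z => P (x + y + z - 2))).
have -> : NC3 d k = 2 * (\sum_(c : cell d) P (len1 c + len2 c + len4 c - 2)
                      + \sum_(c : cell d) P (len2 c + len3 c + len4 c - 2)).
  rewrite /NC3 -big_split big_cells; congr (2 * _).
  apply: eq_bigr => i _; apply: eq_bigr => j _; apply: eq_bigr => l _.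
  have [e1 e2 e3 e4] := lens_at i j l; rewrite /F3 e1 e2 e3 e4.
  by rewrite (addrAC (len2 _)).
ring.
Qed.

Lemma sum_quad : \sum_(c : cell d) quad k c = NC4 d k.
Proof.
rewrite /NC4 big_cells; apply: eq_bigr => i _; apply: eq_bigr => j _; apply: eq_bigr => l _.
by have [e1 e2 e3 e4] := lens_at i j l; rewrite /F4 e1 e2 e3 e4.
Qed.
End CellSums.

Unset Implicit Arguments.

Theorem proposition4p2 (d k : nat) (hd : (2 <= d)%N) :
  NC d k = (d ^ 3)%:R - NC1 d k + NC2 d k - NC3 d k + NC4 d k.
Proof.
have d_gt0 : (0 < d)%N by apply: leq_trans hd.
have cube : (d ^ 3)%:R = \sum_(c : cell d) 1 :> rat by rewrite sumr_const card_cells.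
rewrite NC_sum_cover // cube -sum_singles // -sum_pairs -sum_triples -sum_quad.
by rewrite -!sumrN -!big_split.
Qed.
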